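(* Let $r\ge 1$, $N\ge 1$ and $n\ge 1$ be integers. Then $$B_{N,n}^{(r)}=n!\sum_{k=1}^{n}(-1)^k\sum_{\substack{e_1+\cdots+e_k=n\\ e_1,\dots,e_k\ge 1}}M_r(e_1)\cdots M_r(e_k),$$ where for an integer $e\ge 0$, $$M_r(e)=\sum_{\substack{i_1+\cdots+i_r=e\\ i_1,\dots,i_r\ge 0}}\frac{(N!)^r}{(N+i_1)!\cdots(N+i_r)!}.$$
   Context: For positive integers $N$ and $r$, the higher order hypergeometric Bernoulli numbers $B^{(r)}_{N,n}$ ($n\ge0$) are defined by $$\left(\frac{x^N/N!}{e^x-\sum_{n=0}^{N-1}x^n/n!}\right)^r=\sum_{n=0}^\infty B_{N,n}^{(r)}\frac{x^n}{n!}.$$ *)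

From mathcomp Require Import all_boot all_order all_algebra.
Set Implicit Arguments. Unset Strict Implicit. Unset Printing Implicit Defensive.
Import Order.TTheory GRing.Theory Num.Theory.
Local Open Scope ring_scope.

(* Formal power series over the rationals, represented by their coefficient
   sequences: a : nat -> rat stands for \sum_n a n x^n. *)
Definition fps := nat -> rat.

Definition fps_one : fps := fun n => (n == 0%N)%:R.

Definition fps_mul (a b : fps) : fps :=
  fun n => \sum_(i < n.+1) a i * b (n - i)%N.

Definition fps_pow (a : fps) (r : nat) : fps := iter r (fps_mul a) fps_one.

(* Quotient a / b of formal power series, where b has valuation v
   (b v <> 0, b i = 0 for i < v) and a is divisible by x^v. *)
Fixpoint fps_div_coefs (a b : fps) (v k : nat) : seq rat :=
  match k with
  | 0 => [::]
  | k'.+1 =>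
      let s := fps_div_coefs a b v k' in
      rcons s ((a (k' + v)%N - \sum_(i < k') s`_i * b (k' + v - i)%N) / b v)
  end.

Definition fps_div (a b : fps) (v : nat) : fps :=
  fun n => (fps_div_coefs a b v n.+1)`_n.

Definition hb_num (N : nat) : fps :=
  fun n => if n == N then (N`!%:R)^-1 else 0.

Definition hb_den (N : nat) : fps :=
  fun n => if (N <= n)%N then (n`!%:R)^-1 else 0.

(* Higher order hypergeometric Bernoulli numbers B^{(r)}_{N,n}:
   n! times the n-th coefficient of ((x^N/N!)/(e^x - \sum_{n<N} x^n/n!))^r. *)
Definition hbernoulli (N r n : nat) : rat :=
  n`!%:R * fps_pow (fps_div (hb_num N) (hb_den N) N) r n.

Definition Mr (N r e : nat) : rat :=
  \sum_(i : {ffun 'I_r -> 'I_e.+1} | (\sum_(j < r) (i j : nat))%N == e)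
     (N`!%:R ^+ r) / \prod_(j < r) ((N + i j)`!)%:R.

From mathcomp Require Import all_boot all_order all_algebra.
From mathcomp Require Import zify.

(* Let q = (x^N/N!) / (e^x - \sum_(n < N) x^n/n!) and G = \sum_i N!/(N + i)! x^i,
   so that q G = 1 and q^r = 1 / (1 + H) with H = G^r - 1 = \sum_(e >= 1) M_r(e) x^e.
   As H has no constant term, modulo x^(n+1) this inverse is the finite geometric
   sum \sum_(k <= n) (-H)^k, and the coefficient of x^n in H^k is the sum of
   M_r(e_1) ... M_r(e_k) over the compositions (e_1, ..., e_k) of n.  All series
   are handled as polynomials truncated below degree n + 1. *)

Set Implicit Arguments. Unset Strict Implicit. Unset Printing Implicit Defensive.
Import Order.TTheory GRing.Theory Num.Theory.
Local Open Scope ring_scope.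

Section TakePoly.
Variable R : nzRingType.
Implicit Types p q : {poly R}.

Lemma take_polyMl m p q : take_poly m (take_poly m p * q) = take_poly m (p * q).
Proof.
rewrite -{2}(poly_take_drop m p) mulrDl take_polyD -mulrA.
by rewrite -(commr_polyXn q m) mulrA take_polyMXn_0 addr0.
Qed.

Lemma take_polyMr m p q : take_poly m (p * take_poly m q) = take_poly m (p * q).
Proof.
by rewrite -{2}(poly_take_drop m q) mulrDr take_polyD mulrA take_polyMXn_0 addr0.
Qed.

Lemma take_poly_expr m p k : take_poly m (take_poly m p ^+ k) = take_poly m (p ^+ k).
Proof.
elim: k => [|k IHk]; first by rewrite !expr0.
by rewrite !exprS -take_polyMr IHk take_polyMr take_polyMl.
Qed.

Lemma take_poly_expr_coef0 m p : p`_0 = 0 -> take_poly m (p ^+ m) = 0.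
Proof.
move=> p0; have {1}-> : p = drop_poly 1 p * 'X.
  rewrite -{1}(poly_take_drop 1 p) expr1 addrC -[RHS]addr0; congr (_ + _).
  apply/polyP => i; rewrite coef_take_poly coef0.
  by case: i => [|i] //=; rewrite p0.
by rewrite exprMn_comm ?take_polyMXn_0 //; exact: commr_polyX.
Qed.
End TakePoly.

Lemma take_poly_geom_inverse (R : comNzRingType) m (P H : {poly R}) : H`_0 = 0 ->
    take_poly m (P * (1 + H)) = take_poly m 1 ->
  take_poly m P = take_poly m (\sum_(k < m) (- H) ^+ k).
Proof.
move=> H0 PH1.
have geom : 1 - (- H) ^+ m = (1 + H) * \sum_(k < m) (- H) ^+ k.
  by rewrite -opprB subrX1 -mulNr opprB opprK.
have NH0 : (- H)`_0 = 0 by rewrite coefN H0 oppr0.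
have -> : take_poly m P = take_poly m (P - P * (- H) ^+ m).
  by rewrite raddfB /= -take_polyMr take_poly_expr_coef0 // mulr0 raddf0 subr0.
by rewrite -{1}[P]mulr1 -mulrBr geom mulrA -take_polyMl PH1 take_polyMl mul1r.
Qed.

Section CoefExpr.
Variable R : comNzRingType.
Implicit Types p : {poly R}.

Lemma coef_expr_ffun p k n : (p ^+ k)`_n =
  \sum_(e : {ffun 'I_k -> 'I_n.+1} | (\sum_(j < k) (e j : nat))%N == n)
     \prod_(j < k) p`_(e j).
Proof.
transitivity (take_poly n.+1 (p ^+ k))`_n; first by rewrite coef_take_poly ltnSn.
rewrite -take_poly_expr coef_take_poly ltnSn.
have -> : take_poly n.+1 p ^+ k = \prod_(j < k) take_poly n.+1 p.
  by rewrite prodr_const card_ord.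
rewrite /take_poly poly_def bigA_distr_bigA /= coef_sum [RHS]big_mkcond /=.
apply: eq_bigr => e _.
have -> : \prod_(j < k) (p`_(e j) *: 'X^(e j)) =
    (\prod_(j < k) p`_(e j))%:P * 'X^(\sum_(j < k) (e j : nat)).
  rewrite -prodrXr rmorph_prod -big_split.
  by apply: eq_bigr => j _; rewrite /= mul_polyC.
by rewrite coefCM coefXn eq_sym; case: eqP; rewrite ?mulr1 ?mulr0.
Qed.

Lemma coef_expr_compositions p k n : p`_0 = 0 -> (p ^+ k)`_n =
  \sum_(e : {ffun 'I_k -> 'I_n.+1} |
          ((\sum_(j < k) (e j : nat))%N == n) && [forall j, (0 < e j)%N])
     \prod_(j < k) p`_(e j).
Proof.
move=> p0; rewrite coef_expr_ffun.
rewrite (bigID (fun e : {ffun 'I_k -> 'I_n.+1} => [forall j, (0 < e j)%N])) /=.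
rewrite [X in _ + X]big1 ?addr0 // => e /andP[_ /forallPn[j]].
by rewrite lt0n negbK => /eqP ej0; rewrite (bigD1 j) //= ej0 p0 mul0r.
Qed.
End CoefExpr.

Lemma fps_powE (a : fps) m r i : (i < m)%N ->
  fps_pow a r i = ((\poly_(j < m) a j) ^+ r)`_i.
Proof.
elim: r i => [|r IHr] i lt_im; first by rewrite expr0 coef1.
rewrite exprS coefM /fps_pow iterS -/(fps_pow a r); apply: eq_bigr => j _.
have lt_ji := ltn_ord j; rewrite coef_poly IHr; last by lia.
by have -> : (j < m)%N by lia.
Qed.

Lemma size_fps_div_coefs a b v k : size (fps_div_coefs a b v k) = k.
Proof. by elim: k => //= k IHk; rewrite size_rcons IHk. Qed.

Lemma nth_fps_div_coefs a b v k i : (i < k)%N ->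
  (fps_div_coefs a b v k)`_i = fps_div a b v i.
Proof.
elim: k => // k IHk lt_ik; rewrite /= nth_rcons size_fps_div_coefs.
case: (ltngtP i k) => [/IHk //|lt_ki|->]; first by lia.
by rewrite /fps_div /= nth_rcons size_fps_div_coefs ltnn eqxx.
Qed.

Lemma fps_div_conv a b v k : b v != 0 ->
  \sum_(i < k.+1) fps_div a b v i * b (k + v - i)%N = a (k + v)%N.
Proof.
move=> bv0; rewrite big_ord_recr /= addKn {2}/fps_div /=.
rewrite nth_rcons size_fps_div_coefs ltnn eqxx divfK //.
under eq_bigr => i _ do rewrite -(nth_fps_div_coefs a b v (ltn_ord i)).
by rewrite addrC subrK.
Qed.

(* The truncation below degree m of (N! / x^N) (e^x - \sum_(n < N) x^n / n!). *)
Definition hb_series (N m : nat) : {poly rat} :=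
  \poly_(i < m) (N`!%:R / (N + i)`!%:R).

Lemma natr_fact_neq0 k : (k`!%:R : rat) != 0.
Proof. by rewrite pnatr_eq0 -lt0n fact_gt0. Qed.

Lemma take_poly_hb_quot_series N m :
  take_poly m (\poly_(i < m) fps_div (hb_num N) (hb_den N) N i * hb_series N m) =
  take_poly m 1.
Proof.
apply/polyP => k; rewrite !coef_take_poly; case: ltnP => // lt_km.
(* Up to the factor N!, the k-th coefficient is the (k + N)-th one of q * hb_den N. *)
rewrite coefM coef1.
transitivity (N`!%:R *
    \sum_(i < k.+1) fps_div (hb_num N) (hb_den N) N i * hb_den N (k + N - i)%N).
  rewrite mulr_sumr; apply: eq_bigr => i _; have lt_ik := ltn_ord i.
  rewrite !coef_poly /hb_den.
  have -> : (i < m)%N by lia.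
  have -> : (k - i < m)%N by lia.
  have -> : (N <= k + N - i)%N by lia.
  have -> : (k + N - i = N + (k - i))%N by lia.
  by rewrite mulrCA.
rewrite fps_div_conv; last by rewrite /hb_den leqnn invr_eq0 natr_fact_neq0.
rewrite /hb_num; case: k lt_km => [|k] _ /=.
  by rewrite add0n eqxx divff // natr_fact_neq0.
have -> : (k.+1 + N == N) = false by lia.
by rewrite mulr0.
Qed.

Lemma coef0_hb_series_expr N m r : (0 < m)%N -> (hb_series N m ^+ r)`_0 = 1.
Proof.
move=> m_gt0; elim: r => [|r IHr]; first by rewrite expr0 coef1.
by rewrite exprS coef0M IHr coef_poly m_gt0 addn0 divff ?mulr1 // natr_fact_neq0.
Qed.

Lemma coef_hb_series_expr N m r t : (t < m)%N -> (hb_series N m ^+ r)`_t = Mr N r t.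
Proof.
move=> lt_tm; rewrite coef_expr_ffun; apply: eq_bigr => e _.
have -> : (N`!%:R : rat) ^+ r = \prod_(j < r) N`!%:R by rewrite prodr_const card_ord.
rewrite -prodfV -big_split; apply: eq_bigr => j _ /=.
by rewrite coef_poly (leq_trans (ltn_ord (e j)) lt_tm).
Qed.

Theorem proposition7 (r N n : nat) (hr : (1 <= r)%N) (hN : (1 <= N)%N)
    (hn : (1 <= n)%N) :
  hbernoulli N r n =
    n`!%:R *
    \sum_(1 <= k < n.+1)
      (-1) ^+ k *
      \sum_(e : {ffun 'I_k -> 'I_n.+1} |
              ((\sum_(j < k) (e j : nat))%N == n) && [forall j, (0 < e j)%N])
        \prod_(j < k) Mr N r (e j).
Proof.
set Q := \poly_(i < n.+1) fps_div (hb_num N) (hb_den N) N i.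
set H := hb_series N n.+1 ^+ r - 1.
have H0 : H`_0 = 0 by rewrite coefB coef0_hb_series_expr // coef1 subrr.
have HM t : (0 < t < n.+1)%N -> H`_t = Mr N r t.
  by case/andP=> t_gt0 lt_tn; rewrite coefB coef_hb_series_expr // coef1 gtn_eqF ?subr0.
have QH1 : take_poly n.+1 (Q ^+ r * (1 + H)) = take_poly n.+1 1.
  rewrite addrC subrK -exprMn -take_poly_expr take_poly_hb_quot_series.
  by rewrite take_poly_expr expr1n.
have := congr1 (fun p : {poly rat} => p`_n) (take_poly_geom_inverse H0 QH1).
rewrite /= !coef_take_poly ltnSn => QrE.
rewrite /hbernoulli (fps_powE _ _ (ltnSn n)) QrE coef_sum big_ord_recl /=.
rewrite expr0 coef1 gtn_eqF // add0r big_add1 big_mkord; congr (_ * _).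
apply: eq_bigr => k _; rewrite -scaleN1r exprZn coefZ coef_expr_compositions //.
congr (_ * _); apply: eq_big => // e /andP[_ /forallP e_gt0].
by apply: eq_bigr => j _; rewrite HM ?e_gt0 ?ltn_ord.
Qed.
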